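(* Let $q\neq0$ be real. Let $\mathcal M$ be a binary matroid represented by a matrix $M$ over $\mathrm{GF}(2)$ with rows $V$ and columns $E$, let $\boldsymbol\gamma=\{\gamma_e\}_{e\in E}$ be real weights, and let $c\in E$. Suppose $\gamma_1>0$ and $\gamma_2>0$ satisfy $1+\frac{q}{\gamma_c}=\left(1+\frac{q}{\gamma_1}\right)\left(1+\frac{q}{\gamma_2}\right)$. Let $e'$ be a new column and define $\boldsymbol\gamma'=\{\gamma'_e\}_{e\in E\cup\{e'\}}$ by $\gamma'_{e'}=\gamma_2$, $\gamma'_c=\gamma_1$ and $\gamma'_e=\gamma_e$ for all other $e\in E$. Then there is a binary matroid $\mathcal M'$ represented by a matrix $M'$ over $\mathrm{GF}(2)$ with $|V|+1$ rows and columns $E\cup\{e'\}$ such that $\left(1+\frac{\gamma_1}{q}+\frac{\gamma_2}{q}\right)\tilde Z(\mathcal M;q,\boldsymbol\gamma)=\tilde Z(\mathcal M';q,\boldsymbol\gamma')$.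
   Context: A binary matroid represented by a matrix $M$ over $\mathrm{GF}(2)$ with rows $V$ and columns $E$ has ground set $E$ and rank function $r_{\mathcal M}(A)=$ the $\mathrm{GF}(2)$-rank of the submatrix formed by the columns in $A$. The multivariate Tutte polynomial is $\tilde Z(\mathcal M;q,\boldsymbol\gamma)=\sum_{A\subseteq E}q^{-r_{\mathcal M}(A)}\prod_{e\in A}\gamma_e$. *)

From HB Require Import structures.
From mathcomp Require Import all_boot all_order all_algebra all_fingroup.
Set Implicit Arguments. Unset Strict Implicit. Unset Printing Implicit Defensive.
Import Order.TTheory GRing.Theory Num.Theory.
Local Open Scope ring_scope.

(* A binary matroid is represented by a matrix over GF(2) = 'F_2 with m rows
   (the set V, |V| = m) and n columns (the ground set E = 'I_n). *)

Definition mrank (m n : nat) (M : 'M['F_2]_(m, n)) (A : {set 'I_n}) : nat :=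
  \rank (colsub (fun i : 'I_#|A| => enum_val i) M).

Definition Ztilde (R : fieldType) (m n : nat) (M : 'M['F_2]_(m, n))
    (q : R) (gamma : 'I_n -> R) : R :=
  \sum_(A : {set 'I_n}) q ^- (mrank M A) * \prod_(e in A) gamma e.

(* Old column e of E is embedded in E u {e'} = 'I_n.+1 as widen_ord; the new
   column e' is ord_max. *)
Definition old_col (n : nat) (e : 'I_n) : 'I_n.+1 := widen_ord (leqnSn n) e.

Definition split_weights (R : Type) (n : nat) (gamma : 'I_n -> R) (c : 'I_n)
    (g1 g2 : R) (e : 'I_n.+1) : R :=
  match unlift ord_max e with
  | None => g2
  | Some e0 => if e0 == c then g1 else gamma e0
  end.

From HB Require Import structures.
From mathcomp Require Import all_boot all_order all_algebra all_fingroup.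
From mathcomp Require Import ring.
Import Order.TTheory GRing.Theory Num.Theory.
Local Open Scope ring_scope.
Set Implicit Arguments. Unset Strict Implicit. Unset Printing Implicit Defensive.

(* M' is M with one new row, the indicator of {c, e'}, where the new column e'
   is the unit vector of that row; thus e' is in series with c.  For a set B of
   old columns avoiding c, the sets B, B + e', B + c, B + c + e' have rank
   r(B), 1 + r(B), 1 + r(B), 1 + r(B + c) in M'.  Grouping subsets by B and
   writing w for the weight of B, Z~(M') thus has the term
   (g1 + g2) w q^-(r(B) + 1) + g1 g2 w q^-(r(B + c) + 1) where Z~(M) has
   gamma_c w q^-r(B + c); the hypothesis is equivalent to the series rule
   (1 + g1/q + g2/q) gamma_c = g1 g2 / q, which makes every group of Z~(M')
   equal to 1 + g1/q + g2/q times the corresponding group of Z~(M). *)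

Section RowSpan.
Context {F : fieldType}.

Definition rowspan k p (N : 'M[F]_(k, p)) (A : {set 'I_k}) : 'M_p :=
  (\sum_(i in A) <<row i N>>)%MS.

Lemma rowspan_mulmx k p r (N : 'M[F]_(k, p)) (E : 'M_(p, r)) A :
  (rowspan (N *m E) A :=: rowspan N A *m E)%MS.
Proof.
apply: eqmx_sym; apply: eqmx_trans (sumsmxMr_gen _ _ _) _.
apply: eqmx_sums => i _; rewrite row_mul (eq_genmx (eqmxMr E (genmxE _))).
exact: eqmx_refl.
Qed.

Lemma rowspan_setU1 k p (N : 'M[F]_(k, p)) i (A : {set 'I_k}) : i \notin A ->
  rowspan N (i |: A) = (<<row i N>> + rowspan N A)%MS.
Proof. by move=> iA; rewrite /rowspan big_setU1. Qed.

Definition tail_embed m : 'M[F]_(m, 1 + m) := row_mx 0 1%:M.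
Definition lead_coord m : 'M[F]_(1 + m, 1) := col_mx 1 0.
Definition lead_row m : 'rV[F]_(1 + m) := row_mx 1 0.

Lemma tail_embed_lead m : tail_embed m *m lead_coord m = 0.
Proof. by rewrite mul_row_col mul0mx mulmx0 addr0. Qed.

Lemma lead_row_lead m : lead_row m *m lead_coord m = 1.
Proof. by rewrite mul_row_col mulmx1 mul0mx addr0. Qed.

Lemma row_free_tail_embed m : row_free (tail_embed m).
Proof.
apply/row_freeP; exists (col_mx 0 1%:M).
by rewrite mul_row_col mulmx0 mul1mx add0r.
Qed.

Lemma mxrank_adds_lead m k (w : 'rV[F]_(1 + m)) (X : 'M[F]_(k, m)) :
  w *m lead_coord m = 1 -> \rank (<<w>> + X *m tail_embed m)%MS = (1 + \rank X)%N.
Proof.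
move=> wL; rewrite mxrank_disjoint_sum.
  rewrite genmxE rank_rV mxrankMfree ?row_free_tail_embed //.
  by case: eqP => // w0; move: wL; rewrite w0 mul0mx => /eqP; rewrite eq_sym oner_eq0.
(* A vector in both spaces is a multiple of w whose lead coordinate vanishes. *)
set K := (<<w>> :&: _)%MS.
have /submxP[a Ka] : (K <= w)%MS by rewrite -(genmxE w) capmxSl.
have /submxP[Y KY] : (K <= X *m tail_embed m)%MS by rewrite capmxSr.
have : K *m lead_coord m = 0 by rewrite KY -!mulmxA tail_embed_lead !mulmx0.
by rewrite Ka -mulmxA wL mulmx1 => ->; rewrite mul0mx.
Qed.

Lemma addsmx_gen_shift p k (u v : 'rV[F]_p) (X : 'M[F]_(k, p)) :
  (<<u>> + (<<u + v>> + X) :=: <<u>> + (<<v>> + X))%MS.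
Proof.
have shift a (t : 'rV_p) : (<<u>> + (<<a *: u + t>> + X) <= <<u>> + (<<t>> + X))%MS.
  rewrite !addsmx_sub addsmxSl /= andbC; apply/andP; split.
    by apply: submx_trans (addsmxSr _ _); apply: addsmxSr.
  rewrite genmxE; apply: addmx_sub_adds; first by rewrite scalemx_sub ?genmxE.
  by rewrite -(genmxE t) addsmxSl.
apply/eqmxP/andP; split; first by have := shift 1 v; rewrite scale1r.
by have := shift (-1) (u + v); rewrite scaleN1r addKr.
Qed.
End RowSpan.

Lemma mrank_rowspan m n (M : 'M['F_2]_(m, n)) A : mrank M A = \rank (rowspan M^T A).
Proof.
rewrite /mrank -mxrank_tr trmx_mxsub; apply/eqP; rewrite eqn_leq.
apply/andP; split; apply: mxrankS.
  apply/row_subP => i; rewrite row_mxsub mxsub_id.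
  by apply: (sumsmx_sup (enum_val i)); rewrite ?enum_valP ?genmxE.
apply/sumsmx_subP => i Ai; rewrite genmxE.
rewrite -(enum_rankK_in Ai Ai) -[row _ _](row_rowsub (fun j : 'I_#|A| => enum_val j)).
exact: row_sub.
Qed.

Lemma old_col_lift n (e : 'I_n) : old_col e = lift ord_max e.
Proof. by apply/val_inj; rewrite /= /bump leqNgt ltn_ord. Qed.

Lemma old_col_inj n : injective (@old_col n).
Proof. by move=> x y; rewrite !old_col_lift; apply: lift_inj. Qed.

Lemma mem_old_cols n (B : {set 'I_n}) e :
  (old_col e \in [set old_col x | x in B]) = (e \in B).
Proof. exact/mem_imset/old_col_inj. Qed.

Lemma ord_max_notin_old_cols n (B : {set 'I_n}) : ord_max \notin [set old_col e | e in B].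
Proof. by apply/imsetP => -[e _]; apply/eqP; rewrite old_col_lift neq_lift. Qed.

Section SeriesExtension.
Variables (m n : nat) (M : 'M['F_2]_(m, n)) (c : 'I_n).

(* The rows of series_rows are the columns of M', whose new row comes first. *)
Definition series_rows : 'M['F_2]_(n.+1, 1 + m) :=
  \matrix_(i < n.+1) match unlift ord_max i with
                     | None => lead_row m
                     | Some e => row_mx (e == c)%:R (row e M^T)
                     end.

Lemma row_series_new : row ord_max series_rows = lead_row m.
Proof. by rewrite rowK unlift_none. Qed.

Lemma row_series_old e : e != c ->
  row (old_col e) series_rows = row e (M^T *m tail_embed m).
Proof.
move=> /negbTE ec; rewrite rowK old_col_lift liftK ec row_mul.
by rewrite mul_mx_row mulmx0 mulmx1.
Qed.

Lemma row_series_c :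
  row (old_col c) series_rows = lead_row m + row c (M^T *m tail_embed m).
Proof.
rewrite rowK old_col_lift liftK eqxx row_mul mul_mx_row mulmx0 mulmx1.
by rewrite add_row_mx addr0 add0r.
Qed.

Lemma rowspan_series_old (B : {set 'I_n}) : c \notin B ->
  (rowspan series_rows [set old_col e | e in B] :=: rowspan M^T B *m tail_embed m)%MS.
Proof.
move=> cB; apply: eqmx_trans (rowspan_mulmx _ _ _).
rewrite /rowspan big_imset /=; last by move=> x y _ _; apply: old_col_inj.
rewrite (eq_bigr (fun e => <<row e (M^T *m tail_embed m)>>)%MS); first exact: eqmx_refl.
by move=> e eB; rewrite row_series_old //; apply: contraNneq cB => <-.
Qed.

Lemma mrank_series_old (B : {set 'I_n}) : c \notin B ->
  mrank series_rows^T [set old_col e | e in B] = mrank M B.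
Proof.
move=> cB; rewrite !mrank_rowspan trmxK (rowspan_series_old cB).
by rewrite mxrankMfree ?row_free_tail_embed.
Qed.

Lemma mrank_series_new (B : {set 'I_n}) : c \notin B ->
  mrank series_rows^T (ord_max |: [set old_col e | e in B]) = (1 + mrank M B)%N.
Proof.
move=> cB; rewrite !mrank_rowspan trmxK rowspan_setU1 ?ord_max_notin_old_cols //.
rewrite row_series_new (adds_eqmx (eqmx_refl _) (rowspan_series_old cB)).
exact/mxrank_adds_lead/lead_row_lead.
Qed.

Lemma mrank_series_c (B : {set 'I_n}) : c \notin B ->
  mrank series_rows^T [set old_col e | e in c |: B] = (1 + mrank M B)%N.
Proof.
move=> cB; rewrite !mrank_rowspan trmxK imsetU1 rowspan_setU1 ?mem_old_cols //.
rewrite row_series_c (adds_eqmx (eqmx_refl _) (rowspan_series_old cB)).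
apply: mxrank_adds_lead.
by rewrite mulmxDl lead_row_lead row_mul -mulmxA tail_embed_lead mulmx0 addr0.
Qed.

Lemma mrank_series_new_c (B : {set 'I_n}) : c \notin B ->
  mrank series_rows^T (ord_max |: [set old_col e | e in c |: B])
  = (1 + mrank M (c |: B))%N.
Proof.
move=> cB; rewrite !mrank_rowspan trmxK rowspan_setU1 ?ord_max_notin_old_cols //.
rewrite imsetU1 rowspan_setU1 ?mem_old_cols //.
rewrite row_series_new row_series_c addsmx_gen_shift.
have span_c : (<<row c (M^T *m tail_embed m)>> + rowspan M^T B *m tail_embed m
               :=: rowspan M^T (c |: B) *m tail_embed m)%MS.
  apply: eqmx_sym; apply: eqmx_trans (eqmx_sym (rowspan_mulmx _ _ _)) _.
  by rewrite rowspan_setU1 //; apply: adds_eqmx (eqmx_refl _) (rowspan_mulmx _ _ _).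
rewrite (adds_eqmx (eqmx_refl _) (adds_eqmx (eqmx_refl _) (rowspan_series_old cB))).
by rewrite (adds_eqmx (eqmx_refl _) span_c) (mxrank_adds_lead _ (lead_row_lead m)).
Qed.
End SeriesExtension.

Lemma sum_sets_split_mem (R : nmodType) (T : finType) (x : T) (F : {set T} -> R) :
  \sum_(A : {set T}) F A = \sum_(A : {set T} | x \notin A) (F A + F (x |: A)).
Proof.
rewrite (bigID (fun A : {set T} => x \in A)) /= addrC big_split /=; congr (_ + _).
rewrite (reindex_onto (fun A => x |: A) (fun A => A :\ x)) /=; last first.
  by move=> A xA; rewrite setD1K.
apply: eq_bigl => A; rewrite setU11 /=.
have [xA|xA] /= := boolP (x \in A); last by rewrite setU1K ?eqxx.
by apply/eqP => AxA; move: xA; rewrite -AxA setD11.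
Qed.

Lemma sum_sets_notin_ord_max (R : nmodType) n (G : {set 'I_n.+1} -> R) :
  \sum_(A : {set 'I_n.+1} | ord_max \notin A) G A
  = \sum_(B : {set 'I_n}) G [set old_col e | e in B].
Proof.
transitivity (\sum_(A in [set [set old_col e | e in B] | B : {set 'I_n}]) G A); last first.
  by rewrite big_imset //= => B1 B2 _ _; apply: imset_inj; exact: old_col_inj.
apply: eq_bigl => A; apply/idP/imsetP => [AN|[B _ ->]]; last exact: ord_max_notin_old_cols.
exists [set e | old_col e \in A] => //; apply/setP => i.
have [e ->|->] := unliftP ord_max i; first by rewrite -old_col_lift mem_old_cols inE.
by rewrite (negbTE AN) (negbTE (ord_max_notin_old_cols _)).
Qed.

Section SplitWeights.
Variables (R : comRingType) (n : nat) (gamma : 'I_n -> R) (c : 'I_n) (g1 g2 : R).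

Lemma split_weights_old e :
  split_weights gamma c g1 g2 (old_col e) = if e == c then g1 else gamma e.
Proof. by rewrite /split_weights old_col_lift liftK. Qed.

Lemma split_weights_new : split_weights gamma c g1 g2 ord_max = g2.
Proof. by rewrite /split_weights unlift_none. Qed.

Lemma prod_split_weights_old (B : {set 'I_n}) : c \notin B ->
  \prod_(e in [set old_col e | e in B]) split_weights gamma c g1 g2 e
  = \prod_(e in B) gamma e.
Proof.
move=> cB; rewrite big_imset /=; last by move=> x y _ _; apply: old_col_inj.
apply: eq_bigr => e eB; rewrite split_weights_old.
by case: eqP => // ec; move: cB; rewrite -ec eB.
Qed.

Lemma prod_split_weights_c (B : {set 'I_n}) : c \notin B ->
  \prod_(e in [set old_col e | e in c |: B]) split_weights gamma c g1 g2 e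
  = g1 * \prod_(e in B) gamma e.
Proof.
move=> cB; rewrite imsetU1 big_setU1 ?mem_old_cols //=.
by rewrite split_weights_old eqxx prod_split_weights_old.
Qed.
End SplitWeights.

Lemma series_weight_relation (R : fieldType) (q gc g1 g2 : R) :
  q != 0 -> gc != 0 -> g1 != 0 -> g2 != 0 ->
  1 + q / gc = (1 + q / g1) * (1 + q / g2) ->
  (1 + g1 / q + g2 / q) * gc = g1 * g2 / q.
Proof.
move=> q0 gc0 g10 g20 hrel.
have cleared : g1 * g2 * (gc + q) = gc * (g1 + q) * (g2 + q).
  transitivity ((1 + q / gc) * (gc * g1 * g2)); first by field.
  by rewrite hrel; field; apply/andP.
have /eqP : q * (g1 * g2 - gc * (g1 + g2 + q)) = 0.
  by rewrite -(subrr (gc * (g1 + q) * (g2 + q))) -{1}cleared; ring.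
rewrite mulf_eq0 (negbTE q0) subr_eq0 /= => /eqP ->.
by field.
Qed.

Lemma split_term_weights (R : fieldType) (q gc g1 g2 w : R) (r s : nat) :
  q != 0 -> (1 + g1 / q + g2 / q) * gc = g1 * g2 / q ->
  (1 + g1 / q + g2 / q) * (q ^- r * w + q ^- s * (gc * w))
  = q ^- r * w + q ^- (1 + r) * (g2 * w)
    + (q ^- (1 + r) * (g1 * w) + q ^- (1 + s) * (g2 * (g1 * w))).
Proof.
move=> q0 hgc.
have -> : (1 + g1 / q + g2 / q) * (q ^- r * w + q ^- s * (gc * w))
    = (1 + g1 / q + g2 / q) * (q ^- r * w) + q ^- s * w * ((1 + g1 / q + g2 / q) * gc).
  by ring.
by rewrite hgc !exprD !expr1; field; rewrite !(expf_neq0 _ q0) q0.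
Qed.

Theorem mainTheorem5 (R : realFieldType) (q : R) (hq : q != 0)
    (m n : nat) (M : 'M['F_2]_(m, n)) (gamma : 'I_n -> R) (c : 'I_n)
    (g1 g2 : R) (hgc : gamma c != 0) (hg1 : 0 < g1) (hg2 : 0 < g2)
    (hrel : 1 + q / gamma c = (1 + q / g1) * (1 + q / g2)) :
  exists M' : 'M['F_2]_(m.+1, n.+1),
    (1 + g1 / q + g2 / q) * Ztilde M q gamma
    = Ztilde M' q (split_weights gamma c g1 g2).
Proof.
have hgamma_c := series_weight_relation hq hgc (lt0r_neq0 hg1) (lt0r_neq0 hg2) hrel.
exists (series_rows M c)^T.
rewrite /Ztilde (sum_sets_split_mem ord_max) sum_sets_notin_ord_max.
rewrite [RHS](sum_sets_split_mem c) (sum_sets_split_mem c) mulr_sumr.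
apply: eq_bigr => B cB.
rewrite mrank_series_old // mrank_series_new // mrank_series_c // mrank_series_new_c //.
rewrite !big_setU1 ?ord_max_notin_old_cols //= split_weights_new.
rewrite prod_split_weights_old // prod_split_weights_c //.
exact: split_term_weights.
Qed.
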